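(* Let $A$ be an associative algebra and $\{ N_\alpha : A \to A \}_{\alpha \in \Omega}$ a Nijenhuis family. Then $(A, \{ \prec_\alpha, \succ_\alpha, \curlyvee_{\alpha, \beta} \}_{\alpha, \beta \in \Omega})$ is an NS-family algebra, where $a \prec_\alpha b := a \cdot N_\alpha (b)$, $a \succ_\alpha b := N_\alpha (a) \cdot b$ and $a \curlyvee_{\alpha, \beta} b := - N_{\alpha \beta} (a \cdot b)$.
   Context: $\Omega$ is a semigroup. A Nijenhuis family is a collection of linear maps $N_\alpha:A\to A$ with $N_\alpha(a) \cdot N_\beta(b) = N_{\alpha \beta} \big( N_\alpha (a) \cdot b + a \cdot N_\beta(b) - N_{\alpha \beta}(a \cdot b) \big)$ for all $a,b,\alpha,\beta$. An NS-family algebra is a vector space $D$ with bilinear maps $\{ \prec_\alpha, \succ_\alpha, \curlyvee_{\alpha, \beta}\}_{\alpha, \beta \in \Omega}$ such that for all $x,y,z$, $\alpha,\beta,\gamma$: (1) $(x \prec_\alpha y) \prec_\beta z = x \prec_{\alpha \beta} ( y \prec_\beta z + y \succ_\alpha z + y \curlyvee_{\alpha, \beta} z)$; (2) $(x \succ_\alpha y) \prec_\beta z = x \succ_\alpha (y \prec_\beta z)$; (3) $(x \prec_\beta y + x \succ_\alpha y + x \curlyvee_{\alpha, \beta} y) \succ_{\alpha \beta} z = x \succ_\alpha (y \succ_\beta z)$; (4) $( x \prec_\beta y + x \succ_\alpha y + x \curlyvee_{\alpha, \beta} y ) \curlyvee_{\alpha \beta, \gamma} z + (x \curlyvee_{\alpha,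 \beta} y) \prec_\gamma z = x \succ_\alpha (y \curlyvee_{\beta, \gamma} z) + x \curlyvee_{\alpha, \beta \gamma} ( y \prec_\gamma z + y \succ_\beta z + y \curlyvee_{\beta, \gamma} z )$. *)

From mathcomp Require Import all_boot all_order all_algebra.
Set Implicit Arguments. Unset Strict Implicit. Unset Printing Implicit Defensive.
Import GRing.Theory.
Local Open Scope ring_scope.

Definition bilinear_map (K : pzRingType) (V : lmodType K) (f : V -> V -> V) : Prop :=
  (forall (a : K) (x y z : V), f (a *: x + y) z = a *: f x z + f y z) /\
  (forall (a : K) (x y z : V), f x (a *: y + z) = a *: f x y + f x z).

Definition assoc_algebra (K : pzRingType) (A : lmodType K) (mul : A -> A -> A) : Prop :=
  bilinear_map mul /\ (forall x y z, mul (mul x y) z = mul x (mul y z)).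

Definition semigroup_op (Omega : Type) (op : Omega -> Omega -> Omega) : Prop :=
  forall a b c, op (op a b) c = op a (op b c).

Definition nijenhuis_family (K : pzRingType) (A : lmodType K) (mul : A -> A -> A)
    (Omega : Type) (op : Omega -> Omega -> Omega) (N : Omega -> A -> A) : Prop :=
  (forall al, linear (N al)) /\
  (forall (a b : A) (al be : Omega),
     mul (N al a) (N be b) =
     N (op al be) (mul (N al a) b + mul a (N be b) - N (op al be) (mul a b))).

Definition NS_family_algebra (K : pzRingType) (D : lmodType K)
    (Omega : Type) (op : Omega -> Omega -> Omega)
    (prec succ : Omega -> D -> D -> D) (vee : Omega -> Omega -> D -> D -> D) : Prop :=
  (forall al, bilinear_map (prec al)) /\
  (forall al, bilinear_map (succ al)) /\
  (forall al be, bilinear_map (vee al be)) /\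
  (forall (x y z : D) (al be : Omega),
     prec be (prec al x y) z =
     prec (op al be) x (prec be y z + succ al y z + vee al be y z)) /\
  (forall (x y z : D) (al be : Omega),
     prec be (succ al x y) z = succ al x (prec be y z)) /\
  (forall (x y z : D) (al be : Omega),
     succ (op al be) (prec be x y + succ al x y + vee al be x y) z =
     succ al x (succ be y z)) /\
  (forall (x y z : D) (al be ga : Omega),
     vee (op al be) ga (prec be x y + succ al x y + vee al be x y) z
       + prec ga (vee al be x y) z =
     succ al x (vee be ga y z)
       + vee al (op be ga) x (prec ga y z + succ be y z + vee be ga y z)).

(* Axiom (2) is associativity, and (1), (3) are the Nijenhuis identity moved
   across a product by associativity.  For (4), one application of the
   Nijenhuis identity on each side shows that both sides equal
   - N_(al be ga) (N_al(x) y z + x N_be(y) z + x y N_ga(z) - N_(al be ga)(x y z)),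
   the left one bracketed as (al be) ga and the right one as al (be ga). *)

From mathcomp Require Import all_boot all_order all_algebra.
Import GRing.Theory.
Local Open Scope ring_scope.

Section ZmodMorphism.
Context {U V : zmodType} {f : U -> V}.
Hypothesis fB : zmod_morphism f.

Lemma zmod_morphism0 : f 0 = 0.
Proof. by rewrite -(subrr 0) fB subrr. Qed.

Lemma zmod_morphismN x : f (- x) = - f x.
Proof. by rewrite -sub0r fB zmod_morphism0 sub0r. Qed.

Lemma zmod_morphismD x y : f (x + y) = f x + f y.
Proof. by rewrite -{1}[y]opprK fB zmod_morphismN opprK. Qed.

End ZmodMorphism.

Section Bilinear.
Context {K : pzRingType} {V : lmodType K} {f : V -> V -> V}.
Hypothesis f_bil : bilinear_map f.

Lemma bilinear_map_morphl z : zmod_morphism (f^~ z).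
Proof. by move=> x y; rewrite -[- y]scaleN1r addrC f_bil.1 scaleN1r addrC. Qed.

Lemma bilinear_map_morphr z : zmod_morphism (f z).
Proof. by move=> x y; rewrite -[- y]scaleN1r addrC f_bil.2 scaleN1r addrC. Qed.

Lemma bilinear_map_compl {g : V -> V} :
  linear g -> bilinear_map (fun x y => f (g x) y).
Proof. by move=> g_lin; split=> a x y z; rewrite ?g_lin ?f_bil.1 ?f_bil.2. Qed.

Lemma bilinear_map_compr {g : V -> V} :
  linear g -> bilinear_map (fun x y => f x (g y)).
Proof. by move=> g_lin; split=> a x y z; rewrite ?g_lin ?f_bil.1 ?f_bil.2. Qed.

Lemma bilinear_map_postcomp {g : V -> V} :
  linear g -> bilinear_map (fun x y => g (f x y)).
Proof. by move=> g_lin; split=> a x y z; rewrite ?f_bil.1 ?f_bil.2 g_lin. Qed.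

End Bilinear.

Lemma linear_opp {K : pzRingType} {V : lmodType K} {g : V -> V} :
  linear g -> linear (fun x => - g x).
Proof. by move=> g_lin a x y; rewrite g_lin opprD scalerN. Qed.

Section NijenhuisFamily.
Context {K : pzRingType} {A : lmodType K} {mul : A -> A -> A}.
Context {Omega : Type} {op : Omega -> Omega -> Omega} {N : Omega -> A -> A}.
Hypothesis mul_bil : bilinear_map mul.
Hypothesis mulA : forall x y z, mul (mul x y) z = mul x (mul y z).
Hypothesis opA : semigroup_op op.
Hypothesis N_lin : forall al, linear (N al).
Hypothesis N_nij : forall a b al be,
  mul (N al a) (N be b) =
  N (op al be) (mul (N al a) b + mul a (N be b) - N (op al be) (mul a b)).

Local Notation "x ⋅ y" := (mul x y) (at level 40, left associativity).

Let mulDl z := zmod_morphismD (bilinear_map_morphl mul_bil z).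
Let mulDr z := zmod_morphismD (bilinear_map_morphr mul_bil z).
Let mulNl z := zmod_morphismN (bilinear_map_morphl mul_bil z).
Let mulNr z := zmod_morphismN (bilinear_map_morphr mul_bil z).
Let mulBl z := bilinear_map_morphl mul_bil z.
Let mulBr z := bilinear_map_morphr mul_bil z.
Let ND al := zmod_morphismD (zmod_morphism_linear (N_lin al)).

Lemma nijenhuis_prec_prec x y z al be :
  x ⋅ N al y ⋅ N be z =
  x ⋅ N (op al be) (y ⋅ N be z + N al y ⋅ z - N (op al be) (y ⋅ z)).
Proof. by rewrite mulA N_nij (addrC (N al y ⋅ z)). Qed.

Lemma nijenhuis_succ_succ x y z al be :
  N (op al be) (x ⋅ N be y + N al x ⋅ y - N (op al be) (x ⋅ y)) ⋅ z =
  N al x ⋅ (N be y ⋅ z).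
Proof. by rewrite -mulA N_nij (addrC (x ⋅ N be y)). Qed.

Definition nijenhuis_triple al be ga x y z :=
  N al x ⋅ y ⋅ z + x ⋅ N be y ⋅ z + x ⋅ y ⋅ N ga z
  - N (op (op al be) ga) (x ⋅ y ⋅ z).

Lemma nijenhuis_vee_left x y z al be ga :
  - N (op (op al be) ga) ((x ⋅ N be y + N al x ⋅ y - N (op al be) (x ⋅ y)) ⋅ z)
  + (- N (op al be) (x ⋅ y)) ⋅ N ga z =
  - N (op (op al be) ga) (nijenhuis_triple al be ga x y z).
Proof.
rewrite mulNl N_nij -opprD -ND; congr (- N _ _).
by rewrite mulBl !mulDl !addrA subrK (addrC (x ⋅ N be y ⋅ z)).
Qed.

Lemma nijenhuis_vee_right x y z al be ga :
  N al x ⋅ (- N (op be ga) (y ⋅ z))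
  - N (op al (op be ga)) (x ⋅ (y ⋅ N ga z + N be y ⋅ z - N (op be ga) (y ⋅ z))) =
  - N (op (op al be) ga) (nijenhuis_triple al be ga x y z).
Proof.
rewrite mulNr N_nij -opprD -ND -opA; congr (- N _ _).
rewrite mulBr !mulDr -!mulA addrAC addrCA addrK; congr (_ - _).
by rewrite addrC (addrC (x ⋅ y ⋅ N ga z)) addrA.
Qed.

End NijenhuisFamily.

Theorem proposition3p17 (K : fieldType) (A : lmodType K) (mul : A -> A -> A)
    (Omega : Type) (op : Omega -> Omega -> Omega) (N : Omega -> A -> A) :
  assoc_algebra mul -> semigroup_op op -> nijenhuis_family mul op N ->
  NS_family_algebra op
    (fun al a b => mul a (N al b))
    (fun al a b => mul (N al a) b)
    (fun al be a b => - N (op al be) (mul a b)).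
Proof.
move=> [mul_bil mulA] opA [N_lin N_nij].
split; [|split; [|split; [|split; [|split; [|split]]]]].
- by move=> al; apply: bilinear_map_compr.
- by move=> al; apply: bilinear_map_compl.
- move=> al be; exact: (bilinear_map_postcomp mul_bil (linear_opp (N_lin _))).
- move=> x y z al be; exact: (nijenhuis_prec_prec mulA N_nij).
- move=> x y z al be; exact: mulA.
- move=> x y z al be; exact: (nijenhuis_succ_succ mulA N_nij).
- move=> x y z al be ga.
  by rewrite (nijenhuis_vee_left mul_bil N_lin N_nij)
             (nijenhuis_vee_right mul_bil mulA opA N_lin N_nij).
Qed.
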